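(* Let $G$ be a finite group and $H$ a subgroup such that $\mathcal{O}_G(H)=\{K\mid H\le K\le G\}$ is Boolean of rank $2$, with coatoms $M_1,M_2$. If $H$ is normal in $M_1$ and in $M_2$, then $|M_1:H|\neq|M_2:H|$.
   Context: Boolean of rank $2$ means isomorphic to the lattice of subsets of a $2$-element set; the coatoms are the maximal elements of $\mathcal{O}_G(H)\setminus\{G\}$. *)

From mathcomp Require Import all_boot all_fingroup.
Set Implicit Arguments. Unset Strict Implicit. Unset Printing Implicit Defensive.
Local Open Scope group_scope.

Definition overgroups (gT : finGroupType) (H G : {group gT}) (K : {group gT}) : bool :=
  (H \subset K) && (K \subset G).

(* O_G(H) is Boolean of rank 2: there is an order isomorphism from the
   lattice of subsets of a 2-element set ('I_2) onto O_G(H). *)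
Definition boolean_rank2 (gT : finGroupType) (H G : {group gT}) : Prop :=
  exists f : {set 'I_2} -> {group gT},
    [/\ forall A, overgroups H G (f A),
        forall K : {group gT}, overgroups H G K -> exists A, f A = K
      & forall A B : {set 'I_2}, (A \subset B) = (f A \subset f B)].

Definition coatom (gT : finGroupType) (H G : {group gT}) (K : {group gT}) : Prop :=
  [/\ overgroups H G K, K != G
    & forall L : {group gT}, overgroups H G L -> L != G -> K \subset L -> L = K].

From mathcomp Require Import all_boot all_fingroup all_solvable.
Set Implicit Arguments. Unset Strict Implicit. Unset Printing Implicit Defensive.
Local Open Scope group_scope.

(* Every proper member of O_G(H) lies under M1 or M2, so M1 <*> M2 = G and H
   is normal in G. A group is never the union of two proper subgroups, so some
   x in G avoids both M1 and M2; then <x>H = G and G/H is cyclic. In a cyclic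
   group subgroups of equal order coincide, so equal indices would force
   M1/H = M2/H, i.e. M1 = M2. *)

Lemma subsetC1 (T : finType) (A : {set T}) i : (A \subset [set~ i]) = (i \notin A).
Proof. by rewrite subsetC sub1set in_setC. Qed.

Lemma ord2_eq_or (i j k : 'I_2) : i != j -> (k == i) || (k == j).
Proof. by case: i j k => [[|[|//]] ?] [[|[|//]] ?] [[|[|//]] ?]. Qed.

Lemma group_not_cover2 (gT : finGroupType) (G M1 M2 : {group gT}) :
  ~~ (G \subset M1) -> ~~ (G \subset M2) -> exists2 x, x \in G & x \notin M1 :|: M2.
Proof.
case/subsetPn=> a aG aM1 /subsetPn[b bG bM2].
apply/exists_inP; rewrite -negb_forall_in; apply/forall_inP=> cover.
have aM2 : a \in M2 by move: (cover a aG); rewrite inE (negPf aM1).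
have bM1 : b \in M1 by move: (cover b bG); rewrite inE (negPf bM2) orbF.
case/setUP: (cover _ (groupM aG bG)) => abM.
- by move: aM1; rewrite -(groupMr a bM1) abM.
- by move: bM2; rewrite -(groupMl b aM2) abM.
Qed.

Lemma cyclic_quotient_index_inj (gT : finGroupType) (G H M1 M2 : {group gT}) :
  cyclic (G / H) -> M1 \subset G -> M2 \subset G -> H <| M1 -> H <| M2 ->
  #|M1 : H| = #|M2 : H| -> M1 :=: M2.
Proof.
move=> cycGH sM1G sM2G nsHM1 nsHM2 eq_index.
apply: (quotient_inj nsHM1 nsHM2); apply/eqP.
rewrite (eq_subG_cyclic cycGH) ?quotientS //.
by rewrite !card_quotient ?normal_norm // eq_index.
Qed.

Lemma coatom_sub (gT : finGroupType) (H G M1 M2 : {group gT}) :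
  coatom H G M1 -> coatom H G M2 -> M1 \subset M2 -> M1 = M2.
Proof. by case=> _ _ maxM1 [oM2 M2G _] /(maxM1 M2 oM2 M2G). Qed.

Section BooleanRank2.

Variables (gT : finGroupType) (H G : {group gT}) (f : {set 'I_2} -> {group gT}).
Hypotheses (sHG : H \subset G) (f_over : forall A, overgroups H G (f A))
  (f_onto : forall K : {group gT}, overgroups H G K -> exists A, f A = K)
  (f_mono : forall A B : {set 'I_2}, (A \subset B) = (f A \subset f B)).

Lemma boolean_iso_setT : f setT = G.
Proof.
have [A fA] : exists A, f A = G by apply: f_onto; rewrite /overgroups sHG subxx.
apply/val_inj/eqP; rewrite eqEsubset; case/andP: (f_over setT) => _ -> /=.
by rewrite -fA -f_mono subsetT.
Qed.

Lemma boolean_iso_proper (K : {group gT}) :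
  overgroups H G K -> K != G -> exists i, K \subset f [set~ i].
Proof.
move=> oK KG; have [A fA] := f_onto oK.
have: A \proper setT.
  by rewrite properT; apply: contra KG => /eqP AT; rewrite -fA AT boolean_iso_setT.
by case/properP=> _ [i _ iA]; exists i; rewrite -fA -f_mono subsetC1.
Qed.

Lemma boolean_iso_coatom (M : {group gT}) :
  coatom H G M -> exists i, f [set~ i] = M.
Proof.
case=> oM MG maxM; have [i sMf] := boolean_iso_proper oM MG.
exists i; apply: maxM sMf; first exact: f_over.
apply: contraFneq (setC11 i) => fG.
by rewrite -sub1set f_mono fG -boolean_iso_setT -f_mono subsetT.
Qed.

End BooleanRank2.

Lemma boolean_rank2_overgroup_eq (gT : finGroupType) (G H M1 M2 K : {group gT}) :
  H \subset G -> boolean_rank2 H G ->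
  coatom H G M1 -> coatom H G M2 -> M1 != M2 ->
  overgroups H G K -> ~~ (K \subset M1) -> ~~ (K \subset M2) -> K = G.
Proof.
move=> sHG [f [f_over f_onto f_mono]] cM1 cM2 M12 oK KM1 KM2.
apply/eqP; apply: contraNT KM1 => KG.
have [i fi] := boolean_iso_coatom sHG f_over f_onto f_mono cM1.
have [j fj] := boolean_iso_coatom sHG f_over f_onto f_mono cM2.
have [k sKf] := boolean_iso_proper sHG f_over f_onto f_mono oK KG.
have ij : i != j by apply: contraNneq M12 => ij; rewrite -fi -fj ij.
case/orP: (ord2_eq_or k ij) sKf => /eqP->; rewrite ?fi ?fj // => sKM2.
by rewrite sKM2 in KM2.
Qed.

Theorem lemma10p1 (gT : finGroupType) (G H M1 M2 : {group gT}) :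
  H \subset G ->
  boolean_rank2 H G ->
  coatom H G M1 -> coatom H G M2 -> M1 != M2 ->
  (H <| M1)%g -> (H <| M2)%g ->
  #|M1 : H|%g != #|M2 : H|%g.
Proof.
move=> sHG bHG cM1 cM2 M12 nsHM1 nsHM2.
have cover := boolean_rank2_overgroup_eq sHG bHG cM1 cM2 M12.
have [/andP[sHM1 sM1G] M1G _] := cM1.
have [/andP[sHM2 sM2G] M2G _] := cM2.
have joinG : (M1 <*> M2)%G = G.
  apply: cover.
  - by rewrite /overgroups (subset_trans sHM1 (joing_subl _ _)) join_subG sM1G.
  - by apply: contra M12 => /(subset_trans (joing_subr _ _))/(coatom_sub cM2 cM1) ->.
  - by apply: contra M12 => /(subset_trans (joing_subl _ _))/(coatom_sub cM1 cM2) ->.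
have nHG : G \subset 'N(H) by rewrite -joinG join_subG !normal_norm.
have [x xG] : exists2 x, x \in G & x \notin M1 :|: M2.
  by apply: group_not_cover2; apply: proper_subn; rewrite properEneq ?sM1G ?sM2G andbT.
rewrite inE negb_or => /andP[xM1 xM2].
have cycleHG : (<[x]> <*> H)%G = G.
  apply: cover; rewrite ?join_subG ?cycle_subG.
  - by rewrite /overgroups joing_subr join_subG cycle_subG xG.
  - by rewrite (negPf xM1).
  - by rewrite (negPf xM2).
have cycGH : cyclic (G / H).
  have xN : x \in 'N(H) := subsetP nHG x xG.
  by rewrite -cycleHG quotientYidr ?cycle_subG // quotient_cycle // cycle_cyclic.
apply: contra M12 => /eqP eq_index; apply/eqP/val_inj.
exact: cyclic_quotient_index_inj cycGH sM1G sM2G nsHM1 nsHM2 eq_index.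
Qed.
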